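(* Let $n\ge1$ be an integer and $p>2$. Let $w$ be the fundamental solution of the $p$-Laplace equation in $\mathbb{R}^n$, i.e. \[w(x)=-c_{n,p}\tfrac{p-1}{p-n}|x|^{\frac{p-n}{p-1}}\ \text{ if } p\neq n,\qquad w(x)=-c_{n,n}\ln|x|\ \text{ if } p=n,\] with a constant $c_{n,p}>0$, and let $V(x):=\sum_{i=1}^N a_i w(x-y_i)$ with $N\ge1$, $a_i>0$, $y_i\in\mathbb{R}^n$. Then for every concave function $K\in C^2(\mathbb{R}^n)$, \[\Delta_p\big(V(x)+K(x)\big)\le 0\] at every point $x\in\mathbb{R}^n\setminus\{y_1,\dots,y_N\}$ where $\nabla V(x)+\nabla K(x)\neq0$ (i.e. wherever the left-hand side is defined).
   Context: For a function $u$ that is $C^2$ near $x$ with $\nabla u(x)\neq0$, the $p$-Laplacian is $\Delta_p u=|\nabla u|^{p-2}\Big((p-2)\frac{\nabla u\,(\mathcal{H}u)\,\nabla u^T}{|\nabla u|^2}+\Delta u\Big)$, where $\mathcal{H}u$ is the Hessian matrix of $u$. *)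

From HB Require Import structures.
From mathcomp Require Import all_boot all_order all_algebra.
From mathcomp Require Import all_classical all_reals all_analysis.
Set Implicit Arguments. Unset Strict Implicit. Unset Printing Implicit Defensive.
Import Order.TTheory GRing.Theory Num.Theory.
Import numFieldNormedType.Exports.
Local Open Scope ring_scope.

Section PLap.
Variables (R : realType) (n : nat).
Notation V := 'rV[R]_n.

Definition ebasis (i : 'I_n) : V := delta_mx 0 i.

(* Euclidean norm on R^n (NOT the max norm of the matrix normed module) *)
Definition enorm (v : V) : R := Num.sqrt (\sum_(i < n) v 0 i ^+ 2).

Definition partial (f : V -> R) (i : 'I_n) (x : V) : R := derive f x (ebasis i).

Definition grad (f : V -> R) (x : V) : V := \row_i partial f i x.

Definition hess (f : V -> R) (x : V) : 'M[R]_n :=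
  \matrix_(i, j) partial (partial f j) i x.

Definition laplacian (f : V -> R) (x : V) : R := \tr (hess f x).

(* p-Laplacian at a point with non-vanishing gradient, by the stated formula *)
Definition plaplacian (p : R) (f : V -> R) (x : V) : R :=
  let g := grad f x in
  (enorm g) `^ (p - 2) *
  ((p - 2) * ((g *m hess f x *m g^T) 0 0) / (enorm g) ^+ 2 + laplacian f x).

Definition C2 (f : V -> R) : Prop :=
  continuous f /\
  (forall i x, derivable f x (ebasis i)) /\
  (forall i, continuous (partial f i)) /\
  (forall i j x, derivable (partial f j) x (ebasis i)) /\
  (forall i j, continuous (partial (partial f j) i)).

Definition concave (f : V -> R) : Prop :=
  forall (x y : V) (t : R), 0 <= t <= 1 ->
    t * f x + (1 - t) * f y <= f (t *: x + (1 - t) *: y).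

Definition fundsol (p c : R) (x : V) : R :=
  if p == n%:R then - c * ln (enorm x)
  else - c * ((p - 1) / (p - n%:R)) * (enorm x) `^ ((p - n%:R) / (p - 1)).

End PLap.

From HB Require Import structures.
From mathcomp Require Import all_boot all_order all_algebra.
From mathcomp Require Import all_classical all_reals all_analysis.
From mathcomp Require Import ring lra.
Import Order.TTheory GRing.Theory Num.Theory.
Import numFieldNormedType.Exports.
Set Implicit Arguments. Unset Strict Implicit. Unset Printing Implicit Defensive.
Local Open Scope ring_scope.

(* Both terms of the p-Laplacian formula are linear in the Hessian H once the
   gradient g is fixed, so it suffices to show that
     L(H) := (p - 2) g H g^T / |g|^2 + tr H
   is nonpositive on the Hessian of each summand.  A concave C^2 function has a
   negative semidefinite Hessian (its derivative along any line is nonincreasing,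
   by the tangent-line inequality), which makes both terms of L nonpositive.
   A summand w(x - y) is radial with profile phi, phi' <= 0 and
   (p - 1) phi'' + (n - 1) phi' / r = 0; its Hessian is A d^T d + (phi'/r) I with
   d = x - y, r = |d| and A = phi''/r^2 - phi'/r^3 >= 0, so Cauchy-Schwarz gives
   L(H) <= (p - 1) A r^2 + (p - 2 + n) phi'/r = (p - 1) phi'' + (n - 1) phi'/r = 0. *)

Section LineRestriction.
Variables (R : realType) (U : normedModType R).
Implicit Types (f : U -> R) (x v : U).

Lemma derive_lineE f x v : 'D_v f x = 'D_1 (fun h : R => f (h *: v + x)) 0.
Proof.
rewrite /derive; suff -> : (fun h : R => h^-1 *: ((f \o shift x) (h *: v) - f x)) =
  (fun h : R => h^-1 *: (f ((h *: (1 : R) + 0) *: v + x) - f (0 *: v + x))) by [].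
by apply: funext => h /=; rewrite addr0 scale0r add0r [_ *: 1]mulr1.
Qed.

Lemma is_derive_lineP f x v d :
  is_derive x v f d <-> is_derive (0 : R) 1 (fun h : R => f (h *: v + x)) d.
Proof.
split=> -[fv <-]; split.
- by move/derivable1P: fv.
- by rewrite derive_lineE.
- by apply/derivable1P.
- by rewrite derive_lineE.
Qed.

End LineRestriction.

Section DirectionalChainRules.
Variables (R : realType) (U : normedModType R).
Implicit Types (f : U -> R) (x v : U).

Lemma is_derive_line_at f x v s d :
  is_derive (s *: v + x) v f d -> is_derive s 1 (fun h : R => f (h *: v + x)) d.
Proof.
move=> /is_derive_lineP D; apply/is_derive_lineP.
by under eq_fun do rewrite [_ *: 1]mulr1 scalerDl -addrA.
Qed.

Lemma is_derive_comp1 (g : U -> R) (phi : R -> R) x v a b :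
  is_derive x v g b -> is_derive (g x) 1 phi a -> is_derive x v (phi \o g) (a * b).
Proof.
move=> /is_derive_lineP Dg Dphi; apply/is_derive_lineP.
have Dphi' : is_derive ((fun h : R => g (h *: v + x)) 0) 1 phi a.
  by rewrite /= scale0r add0r.
exact: is_derive1_comp Dphi' Dg.
Qed.

Lemma is_derive_scaledir f x v c d :
  is_derive x v f d -> is_derive x (c *: v) f (c * d).
Proof.
move=> /is_derive_lineP Df; apply/is_derive_lineP.
have Dc : is_derive (0 : R) 1 (fun h : R => h * c) c.
  have := is_deriveM (is_derive_id (0 : R) (1 : R)) (is_derive_cst c (0 : R) (1 : R)).
  by rewrite scaler0 add0r [_%:A]mulr1.
have Df' : is_derive ((fun h : R => h * c) 0) 1 (fun h : R => f (h *: v + x)) d.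
  by rewrite mul0r.
suff -> : (fun h : R => f (h *: (c *: v) + x)) = (fun h => f (h *: v + x)) \o (fun h : R => h * c).
  by rewrite mulrC; exact: (is_derive1_comp (g := fun h : R => h * c) Df' Dc).
by apply: funext => h /=; rewrite scalerA.
Qed.

Lemma is_derive_sum_fun m (h : 'I_m -> U -> R) x v (dh : 'I_m -> R) :
  (forall i, is_derive x v (h i) (dh i)) ->
  is_derive x v (fun z => \sum_(i < m) h i z) (\sum_(i < m) dh i).
Proof. by move=> D; have := is_derive_sum D; rewrite fct_sumE. Qed.

End DirectionalChainRules.

Lemma near_neq (R : realType) (U : normedModType R) (x y : U) :
  x != y -> \forall z \near x, z != y.
Proof.
move=> xy; have xy0 : x - y != 0 by rewrite subr_eq0.
have Dxy : ((fun z => z - y) @ x --> x - y)%classic.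
  exact: cvgB cvg_id (cvg_cst y).
near=> z; rewrite -subr_eq0; near: z; exact: cvgr_neq0 (x - y) Dxy xy0.
Unshelve. all: by end_near.
Qed.

Section Euclidean.
Variables (R : realType) (n : nat).
Notation V := 'rV[R]_n.
Implicit Types u v x y : V.

Definition dot u v : R := \sum_(k < n) u 0 k * v 0 k.

Lemma dot_mulmx u v : (u *m v^T) 0 0 = dot u v.
Proof. by rewrite mxE; apply: eq_bigr => k _; rewrite mxE. Qed.

Lemma dotC u v : dot u v = dot v u.
Proof. by apply: eq_bigr => k _; rewrite mulrC. Qed.

Lemma dot_ebasis u i : dot u (ebasis R i) = u 0 i.
Proof.
rewrite /dot (bigD1 i) //= big1 ?addr0 => [|k ki]; rewrite /ebasis mxE eqxx.
  by rewrite eqxx mulr1.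
by rewrite (negbTE ki) mulr0.
Qed.

Lemma dot0r u : dot u 0 = 0.
Proof. by rewrite /dot big1 // => k _; rewrite mxE mulr0. Qed.

Lemma dotvv_ge0 v : 0 <= dot v v.
Proof. by apply: sumr_ge0 => k _; rewrite -expr2 sqr_ge0. Qed.

Lemma dotvv_gt0 v : v != 0 -> 0 < dot v v.
Proof.
move=> v0; have [k vk] : exists k, v 0 k != 0.
  apply/existsP; apply: contraNT v0 => /existsPn vk0.
  by apply/eqP/rowP => k; move: (vk0 k); rewrite negbK mxE => /eqP.
rewrite /dot (bigD1 k) //= ltr_pwDl ?mulf_gt0 //.
  by rewrite -expr2 exprn_even_gt0.
by apply: sumr_ge0 => i _; rewrite -expr2 sqr_ge0.
Qed.

Lemma enormE v : enorm v = Num.sqrt (dot v v).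
Proof. by congr Num.sqrt; apply: eq_bigr => k _; rewrite expr2. Qed.

Lemma enorm_sqr v : enorm v ^+ 2 = dot v v.
Proof. by rewrite enormE sqr_sqrtr // dotvv_ge0. Qed.

Lemma enorm_gt0 v : v != 0 -> 0 < enorm v.
Proof. by move=> v0; rewrite enormE sqrtr_gt0 dotvv_gt0. Qed.

Lemma dot_sqr_le u v : dot u v ^+ 2 <= dot u u * dot v v.
Proof.
have [->|v0] := eqVneq v 0; first by rewrite !dot0r expr0n mulr0.
set D := dot v v; set S := dot u v.
have D0 : 0 < D := dotvv_gt0 v0.
have E : dot (D *: u - S *: v) (D *: u - S *: v) = D * (dot u u * D - S ^+ 2).
  rewrite /dot (eq_bigr (fun k => D ^+ 2 * (u 0 k * u 0 k)
      - 2 * D * S * (u 0 k * v 0 k) + S ^+ 2 * (v 0 k * v 0 k))); last first.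
    by move=> k _; rewrite !mxE; ring.
  rewrite !big_split sumrN /= -!mulr_sumr -/(dot u u) -/(dot u v) -/(dot v v) -/S -/D.
  ring.
have := dotvv_ge0 (D *: u - S *: v).
by rewrite E pmulr_rge0 // subr_ge0 mulrC.
Qed.

Lemma is_derive_coord_sub x v y k : is_derive x v (fun z : V => (z - y) 0 k) (v 0 k).
Proof.
apply/is_derive_lineP.
have -> : (fun h : R => (h *: v + x - y) 0 k) = (fun h => v 0 k * h + (x - y) 0 k).
  by apply: funext => h; rewrite !mxE addrA mulrC.
apply: is_derive_eq (is_deriveD (is_deriveZ (v 0 k) (is_derive_id (0 : R) (1 : R)))
  (is_derive_cst ((x - y) 0 k) (0 : R) (1 : R))) _.
by rewrite addr0 [_ *: 1]mulr1.
Qed.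

Lemma is_derive_dot_sub x v y :
  is_derive x v (fun z : V => dot (z - y) (z - y)) (2 * dot (x - y) v).
Proof.
apply: is_derive_eq (is_derive_sum_fun (fun k => is_deriveM
  (is_derive_coord_sub x v y k) (is_derive_coord_sub x v y k))) _.
by rewrite /dot mulr_sumr; apply: eq_bigr => k _; rewrite /GRing.scale /=; ring.
Qed.

Lemma is_derive_enorm_sub x v y : x != y ->
  is_derive x v (fun z : V => enorm (z - y)) (dot (x - y) v / enorm (x - y)).
Proof.
move=> xy; have d0 : x - y != 0 by rewrite subr_eq0.
have r0 : enorm (x - y) != 0 by rewrite gt_eqF // enorm_gt0.
have D := is_derive_comp1 (is_derive_dot_sub x v y) (is_derive1_sqrt (dotvv_gt0 d0)).
have -> : (fun z => enorm (z - y)) = Num.sqrt \o (fun z => dot (z - y) (z - y)).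
  by apply: funext => z; rewrite /= enormE.
by apply: is_derive_eq D _; rewrite -enormE; field.
Qed.

End Euclidean.

Section CoordinateChainRule.
Variables (R : realType) (n : nat).
Notation V := 'rV[R]_n.

Definition row_prefix (v : V) (k : nat) : V := \row_i (if (i < k)%N then v 0 i else 0).

Lemma row_prefix0 v : row_prefix v 0 = 0.
Proof. by apply/rowP => i; rewrite !mxE. Qed.

Lemma row_prefix_full v : row_prefix v n = v.
Proof. by apply/rowP => i; rewrite !mxE ltn_ord. Qed.

Lemma row_prefixS v (k : 'I_n) : row_prefix v k.+1 = row_prefix v k + v 0 k *: ebasis R k.
Proof.
apply/rowP => i; rewrite !mxE ltnS leq_eqVlt eqxx /=.
have [->|ik] := eqVneq i k; first by rewrite ltnn eqxx mulr1 add0r.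
by rewrite (negbTE (ik : (i : nat) != k)) mulr0 addr0.
Qed.

Variable f : V -> R.
Hypothesis f_derivable : forall i z, derivable f z (ebasis R i).
Hypothesis partial_continuous : forall i, continuous (partial f i).

Lemma mvt_partial z c k : exists2 s : R, s \in `[0, 1] &
  f (z + c *: ebasis R k) - f z = c * partial f k (s *: (c *: ebasis R k) + z).
Proof.
pose g s := f (s *: (c *: ebasis R k) + z).
have Dg (s : R) : is_derive s 1 g (c * partial f k (s *: (c *: ebasis R k) + z)).
  by apply/is_derive_line_at/is_derive_scaledir/derivableP.
have [s s01 E] : exists2 s, s \in `[0, 1] &
    g 1 - g 0 = c * partial f k (s *: (c *: ebasis R k) + z) * (1 - 0).
  apply: MVT_segment ler01 (fun s _ => Dg s) _.
  apply: continuous_subspaceT => s.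
  by have [dg _] := Dg s; exact/differentiable_continuous/derivable1_diffP.
by exists s => //; move: E; rewrite /g subr0 mulr1 scale1r scale0r add0r [_ + z]addrC.
Qed.

Lemma increment_partials (x v : V) (h : R) : exists2 xi : 'I_n -> V,
  forall k, exists2 s : R, s \in `[0, 1] &
    xi k = s *: ((h * v 0 k) *: ebasis R k) + (x + h *: row_prefix v k)
  & f (h *: v + x) - f x = h * \sum_k v 0 k * partial f k (xi k).
Proof.
have /fin_all_exists [xi Hxi] : forall k : 'I_n, exists xk : V, exists2 s : R, s \in `[0, 1] &
    xk = s *: ((h * v 0 k) *: ebasis R k) + (x + h *: row_prefix v k) /\
    f (x + h *: row_prefix v k.+1) - f (x + h *: row_prefix v k) = h * v 0 k * partial f k xk.
  move=> k.
  have [s s01 E] := mvt_partial (x + h *: row_prefix v k) (h * v 0 k) k.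
  exists (s *: ((h * v 0 k) *: ebasis R k) + (x + h *: row_prefix v k)); exists s => //.
  by split => //; rewrite row_prefixS scalerDr addrA scalerA E.
exists xi => [k|]; first by have [s s01 [-> _]] := Hxi k; exists s.
have -> : f (h *: v + x) - f x =
    \sum_(0 <= k < n) (f (x + h *: row_prefix v k.+1) - f (x + h *: row_prefix v k)).
  by rewrite telescope_sumr // row_prefix_full row_prefix0 scaler0 addr0 [x + _]addrC.
rewrite big_mkord mulr_sumr; apply: eq_bigr => k _.
by have [s _ [_ ->]] := Hxi k; rewrite mulrA.
Qed.

Lemma partials_near x e : 0 < e -> exists2 d : R, 0 < d &
  forall z, `|x - z| < d -> forall k, `|partial f k x - partial f k z| < e.
Proof.
move=> e0; have : \forall z \near x, forall k, `|partial f k x - partial f k z| < e.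
  have := @filter_forall _ _ (fun k => [set z | `|partial f k x - partial f k z| < e]%classic) (nbhs x) _.
  apply => k.
  by have /cvgrPdist_lt := @partial_continuous k x; apply.
by case/(nbhs_ballP _ _) => d d0 Hd; exists d => // z xz; apply: Hd; rewrite -ball_normE.
Qed.

Lemma is_derive_grad x v : is_derive x v f (dot v (grad f x)).
Proof.
set L := dot v (grad f x).
suff Hcv : ((fun h : R => h^-1 *: ((f \o shift x) (h *: v) - f x)) @ 0^' --> L)%classic.
  have Hder : derivable f x v by apply/cvg_ex; exists L.
  by split => //; exact: cvg_lim Hcv.
apply/cvgrPdist_lt => e e0.
set SV := \sum_(k < n) `|v 0 k|.
have SV0 : 0 <= SV by apply: sumr_ge0 => k _; exact: normr_ge0.
set e' := e / (SV + 1).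
have e'0 : 0 < e' by apply: divr_gt0 => //; lra.
have [d d0 Hd] := partials_near x e'0.
set M := \sum_(k < n) (`|v 0 k *: ebasis R k| + `|row_prefix v k|).
have M0 : 0 <= M by apply: sumr_ge0 => k _; apply: addr_ge0.
near=> h.
have h0 : h != 0 by near: h; exact: nbhs_dnbhs_neq.
have hM : `|h| * (M + 1) < d.
  by rewrite -ltr_pdivlMr ?ltr_wpDl //; near: h; apply: dnbhs0_lt; rewrite divr_gt0 ?ltr_wpDl.
have [xi Hxi ->] := increment_partials x v h.
rewrite /= [_ *: _]mulrA mulVf // mul1r /L /dot -sumrB.
apply: le_lt_trans (ler_norm_sum _ _ _) _.
apply: (@le_lt_trans _ _ (\sum_(k < n) `|v 0 k| * e')).
  apply: ler_sum => k _; rewrite mxE -mulrBr normrM ler_wpM2l // ltW // Hd //.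
  have [s /andP[s0 s1] ->] := Hxi k.
  have -> : x - (s *: ((h * v 0 k) *: ebasis R k) + (x + h *: row_prefix v k)) =
      - (h *: (s *: (v 0 k *: ebasis R k) + row_prefix v k)).
    by apply/rowP => i; rewrite !mxE; ring.
  rewrite normrN normrZ.
  apply: le_lt_trans hM; apply: ler_wpM2l => //.
  apply: le_trans (ler_normD _ _) _; rewrite normrZ ger0_norm //.
  apply: (@le_trans _ _ (`|v 0 k *: ebasis R k| + `|row_prefix v k|)).
    by rewrite lerD2r ler_piMl.
  rewrite /M (bigD1 k) //= -addrA lerDl addr_ge0 //.
  by apply: sumr_ge0 => i _; apply: addr_ge0.
rewrite -mulr_suml -/SV /e' mulrCA -[ltRHS]mulr1 ltr_pM2l // ltr_pdivrMr; lra.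
Unshelve. all: by end_near.
Qed.

End CoordinateChainRule.

Lemma nonincreasing_is_derive_le0 (R : realType) (psi : R -> R) (s L : R) :
  (forall a b, a <= b -> psi b <= psi a) -> is_derive s 1 psi L -> L <= 0.
Proof.
move=> psi_dec [dpsi <-]; apply: limr_le => //.
near=> h; have : h != 0 by near: h; exact: nbhs_dnbhs_neq.
rewrite /= [h *: 1]mulr1 [_ *: _]/GRing.scale /= neq_lt => /orP[hn|hp].
- by rewrite nmulr_rle0 ?invr_lt0 // subr_ge0; apply: psi_dec; lra.
- by rewrite pmulr_rle0 ?invr_gt0 // subr_le0; apply: psi_dec; lra.
Unshelve. all: by end_near.
Qed.

Section ConcaveHessian.
Variables (R : realType) (n : nat).
Notation V := 'rV[R]_n.
Variable K : V -> R.
Hypothesis K_concave : concave K.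

Lemma concave_le_tangent x y d : is_derive x (y - x) K d -> K y <= K x + d.
Proof.
move=> [dK <-]; rewrite -lerBlDl.
have cv := cvg_dnbhs_at_right dK.
rewrite /derive -(cvg_lim _ cv) //; apply: limr_ge; first by apply/cvg_ex; eexists; exact: cv.
near=> h.
have h0 : 0 < h by near: h; exact: nbhs_right_gt.
have h1 : h <= 1 by near: h; exact: nbhs_right_le.
have := K_concave y x (t := h); rewrite (ltW h0) h1 => /(_ isT).
have -> : h *: y + (1 - h) *: x = h *: (y - x) + x.
  by apply/rowP => i; rewrite !mxE; ring.
rewrite /= [_ *: _]/GRing.scale /= ler_pdivlMl //; lra.
Unshelve. all: by end_near.
Qed.

Lemma concave_derive_nonincreasing x v (psi : R -> R) :
  (forall s, is_derive (s *: v + x) v K (psi s)) ->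
  forall s t, s <= t -> psi t <= psi s.
Proof.
move=> dK s t; rewrite le_eqVlt => /orP[/eqP -> // | st].
have tangent a b : K (b *: v + x) <= K (a *: v + x) + (b - a) * psi a.
  apply: concave_le_tangent.
  by rewrite opprD addrACA subrr addr0 -scalerBl; apply: is_derive_scaledir.
have := tangent s t; have := tangent t s.
by rewrite -subr_ge0 => ? ?; nra.
Qed.

Hypothesis K_C2 : C2 K.

Lemma concave_hess_nsd x (v : V) : (v *m hess K x *m v^T) 0 0 <= 0.
Proof.
have [_ [dK [cK [dK2 cK2]]]] := K_C2.
pose psi s := dot v (grad K (s *: v + x)).
have dpsi : is_derive (0 : R) 1 psi ((v *m hess K x *m v^T) 0 0).
  have D j := is_deriveZ (v 0 j)
    ((is_derive_lineP _ _ _ _).1 (is_derive_grad (dK2^~ j) (cK2^~ j) x v)).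
  have {}D := is_derive_sum_fun D.
  suff -> : psi = fun s => \sum_j v 0 j * partial K j (s *: v + x).
    apply: is_derive_eq D _; rewrite dot_mulmx; apply: eq_bigr => j _.
    by rewrite [RHS]mulrC !mxE; congr (_ * _); apply: eq_bigr => i _; rewrite !mxE.
  by apply: funext => s; apply: eq_bigr => j _; rewrite mxE.
exact: nonincreasing_is_derive_le0 (concave_derive_nonincreasing
  (fun s => is_derive_grad dK cK (s *: v + x) v)) dpsi.
Qed.
End ConcaveHessian.

Section RadialFunction.
Variables (R : realType) (n : nat).
Notation V := 'rV[R]_n.
Variables (phi phi1 phi2 : R -> R) (y : V).
Hypothesis phi_deriv : forall r : R, 0 < r -> is_derive r 1 phi (phi1 r).
Hypothesis phi1_deriv : forall r : R, 0 < r -> is_derive r 1 phi1 (phi2 r).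

Local Notation f := (fun z : V => phi (enorm (z - y))).

Lemma is_derive_radial x v : x != y ->
  is_derive x v f (phi1 (enorm (x - y)) * (dot (x - y) v / enorm (x - y))).
Proof.
move=> xy; have r0 : 0 < enorm (x - y) by rewrite enorm_gt0 // subr_eq0.
exact: is_derive_comp1 (is_derive_enorm_sub v xy) (phi_deriv r0).
Qed.

Lemma partial_radial x j : x != y ->
  partial f j x = phi1 (enorm (x - y)) * ((x - y) 0 j / enorm (x - y)).
Proof.
move=> xy; rewrite /partial.
by have [_ ->] := is_derive_radial (ebasis R j) xy; rewrite dot_ebasis.
Qed.

Lemma is_derive_partial_radial x i j : x != y ->
  let r := enorm (x - y) in
  is_derive x (ebasis R i) (partial f j)
    (((phi2 r / r ^+ 2 - phi1 r / r ^+ 3) *: ((x - y)^T *m (x - y)) + (phi1 r / r)%:M) i j).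
Proof.
move=> xy r; have r0 : 0 < r by rewrite enorm_gt0 // subr_eq0.
have D1 := is_derive_comp1 (is_derive_enorm_sub (ebasis R i) xy) (phi1_deriv r0).
have D2 := is_derive_comp1 (is_derive_enorm_sub (ebasis R i) xy)
  (is_deriveV (f := id) (lt0r_neq0 r0) (is_derive_id r 1)).
have D := is_deriveM D1 (is_deriveM (is_derive_coord_sub x (ebasis R i) y j) D2).
apply: near_eq_is_derive (is_derive_eq D _).
  by near=> z; rewrite partial_radial //=; near: z; exact: (near_neq xy).
rewrite !fctE !mxE big_ord1 !mxE dot_ebasis -/r [_%:A]mulr1 eq_sym !mxE.
have [<-|ij] := eqVneq i j; rewrite ?eqxx ?(negbTE ij) /= ?mulr1n ?mulr0n /GRing.scale /=;
  by field; exact: lt0r_neq0.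
Unshelve. all: by end_near.
Qed.

Lemma hess_radial x : x != y ->
  let r := enorm (x - y) in
  hess f x = (phi2 r / r ^+ 2 - phi1 r / r ^+ 3) *: ((x - y)^T *m (x - y)) + (phi1 r / r)%:M.
Proof.
move=> xy r; apply/matrixP => i j; rewrite mxE [LHS]/partial.
by have [_ ->] := is_derive_partial_radial i j xy.
Qed.

End RadialFunction.

Section HessianLinearCombination.
Variables (R : realType) (n : nat).
Notation V := 'rV[R]_n.
Variables (m : nat) (a : 'I_m -> R) (f : 'I_m -> V -> R) (K : V -> R).

Local Notation F := (fun z : V => \sum_(l < m) a l * f l z + K z).

Lemma partial_lincomb z j :
  (forall l, derivable (f l) z (ebasis R j)) -> derivable K z (ebasis R j) ->
  partial F j z = \sum_(l < m) a l * partial (f l) j z + partial K j z.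
Proof.
move=> df dK.
have D : is_derive z (ebasis R j) F (\sum_(l < m) a l * partial (f l) j z + partial K j z) :=
  is_deriveD (is_derive_sum_fun (fun l => is_deriveZ (a l) (derivableP (df l)))) (derivableP dK).
by rewrite /partial; have [_ ->] := D.
Qed.

Lemma hess_lincomb x :
  (forall l i, \forall z \near x, derivable (f l) z (ebasis R i)) ->
  (forall i, \forall z \near x, derivable K z (ebasis R i)) ->
  (forall l i j, derivable (partial (f l) j) x (ebasis R i)) ->
  (forall i j, derivable (partial K j) x (ebasis R i)) ->
  hess F x = \sum_(l < m) a l *: hess (f l) x + hess K x.
Proof.
move=> df dK df2 dK2; apply/matrixP => i j.
have D : is_derive x (ebasis R i)
    (fun z => \sum_(l < m) a l * partial (f l) j z + partial K j z)
    (\sum_(l < m) a l * partial (partial (f l) j) i x + partial (partial K j) i x) :=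
  is_deriveD (is_derive_sum_fun (fun l => is_deriveZ (a l) (derivableP (df2 l i j))))
    (derivableP (dK2 i j)).
have E : \forall z \near x,
    \sum_(l < m) a l * partial (f l) j z + partial K j z = partial F j z.
  near=> z; rewrite partial_lincomb //; near: z; last exact: dK.
  by apply: (@filter_forall _ _ (fun l z => derivable (f l) z (ebasis R j))) => l; exact: df.
rewrite [LHS]mxE /partial; have [_ ->] := near_eq_is_derive E D.
by rewrite !mxE summxE; congr (_ + _); apply: eq_bigr => l _; rewrite !mxE.
Unshelve. all: by end_near.
Qed.

End HessianLinearCombination.

Section LinearizedPLaplacian.
Variables (R : realType) (n : nat).
Notation V := 'rV[R]_n.
Variable p : R.

Definition plaplacian_lin (g : V) (H : 'M[R]_n) : R :=
  (p - 2) * (g *m H *m g^T) 0 0 / enorm g ^+ 2 + \tr H.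

Lemma plaplacianE (f : V -> R) x :
  plaplacian p f x = enorm (grad f x) `^ (p - 2) * plaplacian_lin (grad f x) (hess f x).
Proof. by []. Qed.

Lemma plaplacian_lin0 g : plaplacian_lin g 0 = 0.
Proof. by rewrite /plaplacian_lin mulmx0 mul0mx mxE mulr0 mul0r mxtrace0 addr0. Qed.

Lemma plaplacian_linD g H1 H2 :
  plaplacian_lin g (H1 + H2) = plaplacian_lin g H1 + plaplacian_lin g H2.
Proof. by rewrite /plaplacian_lin mulmxDr mulmxDl mxE mxtraceD; ring. Qed.

Lemma plaplacian_linZ g a H : plaplacian_lin g (a *: H) = a * plaplacian_lin g H.
Proof. by rewrite /plaplacian_lin -scalemxAr -scalemxAl mxE mxtraceZ; ring. Qed.

Lemma plaplacian_lin_sum g m (a : 'I_m -> R) (H : 'I_m -> 'M[R]_n) :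
  plaplacian_lin g (\sum_(l < m) a l *: H l) = \sum_(l < m) a l * plaplacian_lin g (H l).
Proof.
rewrite (big_morph _ (plaplacian_linD g) (plaplacian_lin0 g)).
by apply: eq_bigr => l _; rewrite plaplacian_linZ.
Qed.

Hypothesis p_ge2 : 2 <= p.

Lemma plaplacian_lin_nsd_le0 g H :
  (forall v : V, (v *m H *m v^T) 0 0 <= 0) -> plaplacian_lin g H <= 0.
Proof.
move=> H_nsd; rewrite /plaplacian_lin.
have diag_le0 k : H k k <= 0.
  by have := H_nsd (ebasis R k); rewrite /ebasis -rowE dot_mulmx dot_ebasis mxE.
have tr_le0 : \tr H <= 0 by apply: sumr_le0 => k _; exact: diag_le0.
suff : (p - 2) * (g *m H *m g^T) 0 0 / enorm g ^+ 2 <= 0 by lra.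
apply: mulr_le0_ge0; last by rewrite invr_ge0 sqr_ge0.
by apply: mulr_ge0_le0; rewrite ?H_nsd // subr_ge0.
Qed.

Lemma plaplacian_lin_rank1_le g (d : V) A B : g != 0 -> 0 <= A ->
  plaplacian_lin g (A *: (d^T *m d) + B%:M) <= (p - 1) * A * dot d d + (p - 2 + n%:R) * B.
Proof.
move=> g0 A0; have G0 : 0 < dot g g := dotvv_gt0 g0.
have qf : (g *m (A *: (d^T *m d) + B%:M) *m g^T) 0 0 = A * dot g d ^+ 2 + B * dot g g.
  rewrite mulmxDr mul_mx_scalar -scalemxAr mulmxDl -!scalemxAl [LHS]mxE.
  rewrite [X in X + _]mxE [X in _ + X]mxE mulmxA -[_ *m d *m g^T]mulmxA.
  rewrite [(g *m d^T *m _) 0 0]mxE big_ord1 !dot_mulmx.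
  by rewrite [dot d g]dotC expr2.
have tr : \tr (A *: (d^T *m d) + B%:M) = A * dot d d + B * n%:R.
  by rewrite mxtraceD mxtraceZ mxtrace_mulC mxtrace_scalar [\tr _]big_ord1 dot_mulmx mulr_natr.
rewrite /plaplacian_lin qf tr enorm_sqr.
have -> : (p - 2) * (A * dot g d ^+ 2 + B * dot g g) / dot g g =
    (p - 2) * A * (dot g d ^+ 2 / dot g g) + (p - 2) * B.
  by field; exact: lt0r_neq0.
have cs : dot g d ^+ 2 / dot g g <= dot d d by rewrite ler_pdivrMr // mulrC dot_sqr_le.
have pA : 0 <= (p - 2) * A by rewrite mulr_ge0 // subr_ge0.
have := ler_wpM2l pA cs; lra.
Qed.

End LinearizedPLaplacian.

Section RadialSuperposition.
Variables (R : realType) (n : nat).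
Notation V := 'rV[R]_n.
Variables (p : R) (phi phi1 phi2 : R -> R).
Hypothesis p_ge2 : 2 <= p.
Hypothesis phi_deriv : forall r : R, 0 < r -> is_derive r 1 phi (phi1 r).
Hypothesis phi1_deriv : forall r : R, 0 < r -> is_derive r 1 phi1 (phi2 r).
Hypothesis phi1_le0 : forall r : R, 0 < r -> phi1 r <= 0.
Hypothesis phi_radial_harmonic :
  forall r : R, 0 < r -> (p - 1) * phi2 r + (n%:R - 1) * (phi1 r / r) = 0.

Lemma plaplacian_lin_radial_le0 (g x y : V) : g != 0 -> x != y ->
  plaplacian_lin p g (hess (fun z => phi (enorm (z - y))) x) <= 0.
Proof.
move=> g0 xy; rewrite hess_radial //=; set r := enorm (x - y).
have r0 : 0 < r by rewrite enorm_gt0 // subr_eq0.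
have r0' : r != 0 := lt0r_neq0 r0.
have p1 : p - 1 != 0 by apply: lt0r_neq0; rewrite subr_gt0 (lt_le_trans _ p_ge2) // ltr1n.
have phi2E : phi2 r = - (n%:R - 1) * (phi1 r / r) / (p - 1).
  apply: (mulIf p1); rewrite divfK // mulrC mulNr; apply/eqP.
  by rewrite -addr_eq0 phi_radial_harmonic.
set A := phi2 r / r ^+ 2 - phi1 r / r ^+ 3.
have AE : A = - phi1 r / r ^+ 3 * ((p - 2 + n%:R) / (p - 1)).
  by rewrite /A phi2E; field; rewrite r0' p1.
have A0 : 0 <= A.
  have := p_ge2; have := ler0n R n; have := phi1_le0 r0 => *.
  by rewrite AE mulr_ge0 ?divr_ge0 ?exprn_ge0 ?(ltW r0) //; lra.
apply: le_trans (plaplacian_lin_rank1_le p_ge2 _ _ g0 A0) _.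
rewrite -enorm_sqr -/r AE [leLHS](_ : _ = 0) //.
by field; rewrite r0' p1.
Qed.

Lemma plaplacian_radial_concave_le0 m (a : 'I_m -> R) (y : 'I_m -> V) (K : V -> R) x :
  (forall l, 0 <= a l) -> C2 K -> concave K -> (forall l, x != y l) ->
  let F := fun z => \sum_(l < m) a l * phi (enorm (z - y l)) + K z in
  grad F x != 0 -> plaplacian p F x <= 0.
Proof.
move=> a0 C2K cK xy F g0.
have [_ [dK [_ [dK2 _]]]] := C2K.
rewrite plaplacianE /F hess_lincomb.
- rewrite plaplacian_linD plaplacian_lin_sum.
  apply: mulr_ge0_le0; first exact: powR_ge0.
  have radial_le0 : \sum_(l < m) a l * plaplacian_lin p (grad F x)
      (hess (fun z => phi (enorm (z - y l))) x) <= 0.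
    apply: sumr_le0 => l _; apply: mulr_ge0_le0 => //.
    exact: plaplacian_lin_radial_le0.
  have := plaplacian_lin_nsd_le0 p_ge2 (grad F x) (concave_hess_nsd cK C2K x).
  lra.
- move=> l i; apply: filterS (near_neq (xy l)) => z zy.
  by have [] := is_derive_radial phi_deriv (ebasis R i) zy.
- by move=> i; near=> z; exact: dK.
- by move=> l i j; have [] := is_derive_partial_radial phi_deriv phi1_deriv i j (xy l).
- by [].
Unshelve. all: by end_near.
Qed.

End RadialSuperposition.

Section FundamentalSolutionProfile.
Variables (R : realType) (n : nat) (p c : R).
Hypothesis p_gt1 : 1 < p.

Definition fundsol_radial (r : R) : R :=
  if p == n%:R then - c * ln r
  else - c * ((p - 1) / (p - n%:R)) * r `^ ((p - n%:R) / (p - 1)).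

Local Notation beta := ((1 - n%:R) / (p - 1)).

(* The derivative of [fundsol_radial], both for [p = n] (where [beta = -1]) and [p <> n]. *)
Definition fundsol_slope (r : R) : R := - c * r `^ beta.

Lemma is_derive_fundsol_radial (r : R) : 0 < r ->
  is_derive r 1 fundsol_radial (fundsol_slope r).
Proof.
move=> r0; have p1 : p - 1 != 0 by rewrite subr_eq0 gt_eqF.
rewrite /fundsol_radial /fundsol_slope; have [pn|pn] := eqVneq p n%:R.
- have -> : beta = -1 by rewrite -pn; field.
  rewrite powR_inv1 ?ltW //.
  exact (is_deriveZ (- c) (is_derive1_ln r0)).
- have pn' : p - n%:R != 0 by rewrite subr_eq0.
  apply: is_derive_eq (is_deriveZ (- c * ((p - 1) / (p - n%:R))) (is_derive1_powR _ r0)) _.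
  rewrite [_ *: _]/GRing.scale /= mulrA.
  by congr (_ * _ `^ _); field; rewrite ?p1 ?pn'.
Qed.

Lemma is_derive_fundsol_slope (r : R) : 0 < r ->
  is_derive r 1 fundsol_slope (- c * beta * r `^ (beta - 1)).
Proof.
move=> r0; rewrite -mulrA.
exact (is_deriveZ (- c) (is_derive1_powR beta r0)).
Qed.

Lemma fundsol_slope_le0 (r : R) : 0 < c -> 0 < r -> fundsol_slope r <= 0.
Proof. by move=> c0 r0; rewrite /fundsol_slope mulNr oppr_le0 mulr_ge0 ?powR_ge0 ?ltW. Qed.

Lemma fundsol_radial_harmonic (r : R) : 0 < r ->
  (p - 1) * (- c * beta * r `^ (beta - 1)) + (n%:R - 1) * (fundsol_slope r / r) = 0.
Proof.
move=> r0; have p1 : p - 1 != 0 by rewrite subr_eq0 gt_eqF.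
rewrite /fundsol_slope powRB ?lt0r_neq0 ?implybT // powRr1 ?ltW //.
by field; rewrite p1 lt0r_neq0.
Qed.

End FundamentalSolutionProfile.

Theorem lemma4p1 (R : realType) (n : nat) (p c : R) (N : nat)
    (a : 'I_N -> R) (y : 'I_N -> 'rV[R]_n) (K : 'rV[R]_n -> R) :
  (1 <= n)%N -> 2 < p -> 0 < c -> (1 <= N)%N ->
  (forall i, 0 < a i) ->
  C2 K -> concave K ->
  let V := fun x : 'rV[R]_n => \sum_(i < N) a i * fundsol p c (x - y i) in
  forall x : 'rV[R]_n, (forall i, x != y i) ->
    grad (fun z => V z + K z) x != 0 ->
    plaplacian p (fun z => V z + K z) x <= 0.
Proof.
move=> _ p2 c0 _ a0 C2K cK V x xy g0.
have p1 : 1 < p by apply: lt_trans p2; rewrite ltr1n.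
exact: (plaplacian_radial_concave_le0 (ltW p2) (is_derive_fundsol_radial n c p1)
  (is_derive_fundsol_slope n p c) (fun r => fundsol_slope_le0 n p c0)
  (fundsol_radial_harmonic n c p1) (fun l => ltW (a0 l)) C2K cK xy g0).
Qed.
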